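(* Let $T_1\cup\dots\cup T_L=[n]$ be a partition, $p_\ell$ integers and $\Gamma$ an integer. The coefficient matrix (in the variables $(\pmb y,\pmb\delta)\in\mathbb R^n\times\mathbb R^n$) of the constraint system \[y_i+\delta_i\le1\ \ \forall i\in[n],\qquad \sum_{i\in[n]}\delta_i\le\Gamma,\qquad \sum_{i\in T_\ell}y_i=p_\ell\ \ \forall\ell\in[L]\] is totally unimodular.
   Context: $[n]=\{1,\dots,n\}$. This is the constraint system of the adversarial problem of balanced regret multi-representative selection for a fixed value of the auxiliary variable $s$, namely $\max\ \sum_i(\hat c_i+d_i\delta_i)x_i-\sum_i\hat c_iy_i-\Gamma's-\sum_i[d_i-d_ix_i-s]_+y_i$ subject to these constraints and $\pmb y,\pmb\delta$ binary. *)

From mathcomp Require Import all_boot all_order all_algebra.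
Set Implicit Arguments. Unset Strict Implicit. Unset Printing Implicit Defensive.
Import GRing.Theory Num.Theory.
Local Open Scope ring_scope.

Definition totally_unimodular (m n : nat) (A : 'M[int]_(m, n)) : Prop :=
  forall (k : nat) (f : 'I_k -> 'I_m) (g : 'I_k -> 'I_n),
    injective f -> injective g ->
    let d := \det (\matrix_(i < k, j < k) A (f i) (g j)) in
    d = 0 \/ d = 1 \/ d = -1.

(* Incidence matrix of the partition given by the block map T : [n] -> [L]:
   entry (l, i) is 1 iff i belongs to T_l. *)
Definition part_mx (n L : nat) (T : 'I_n -> 'I_L) : 'M[int]_(L, n) :=
  \matrix_(l < L, i < n) (T i == l)%:R.

(* Coefficient matrix in variables (y, delta) in R^n x R^n of
     y_i + delta_i <= 1            (n rows)
     sum_i delta_i <= Gamma        (1 row)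
     sum_{i in T_l} y_i = p_l      (L rows)                                *)
Definition brmrs_mx (n L : nat) (T : 'I_n -> 'I_L) : 'M[int]_(n + (1 + L), n + n) :=
  col_mx (row_mx (1%:M : 'M[int]_n) (1%:M : 'M[int]_n))
    (col_mx (row_mx (0 : 'M[int]_(1, n)) (const_mx 1 : 'M[int]_(1, n)))
            (row_mx (part_mx T) (0 : 'M[int]_(L, n)))).

From mathcomp Require Import all_boot all_order all_algebra.
Set Implicit Arguments. Unset Strict Implicit. Unset Printing Implicit Defensive.
Import GRing.Theory.
Local Open Scope ring_scope.

(* Put the n rows [y_i + delta_i <= 1] on one side and the remaining 1 + L rows
   on the other.  The matrix is 0/1 and each column has at most one 1 on each
   side: column y_i meets row i and the row of the block containing i, column
   delta_i meets row i and the Gamma row.  For such a bipartite incidence matrix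
   every square submatrix has determinant 0 or +-1, by induction on its size:
   either some column has at most one 1 and one expands along it, or every column
   has a 1 on each side, and then the rows weighted +1 on one side and -1 on the
   other sum to zero. *)

Section BipartiteIncidence.

Variable R : comNzRingType.

Definition zero_or_sign (x : R) : Prop := x = 0 \/ x = 1 \/ x = -1.

Definition zero_one_mx m n (A : 'M[R]_(m, n)) : Prop :=
  forall i j, A i j = 0 \/ A i j = 1.

Definition one_per_col_on m n (side : 'I_m -> bool) (A : 'M[R]_(m, n)) : Prop :=
  forall j i1 i2, A i1 j = 1 -> A i2 j = 1 -> side i1 = side i2 -> i1 = i2.

Definition one_per_col m n (A : 'M[R]_(m, n)) : Prop :=
  forall j i1 i2, A i1 j = 1 -> A i2 j = 1 -> i1 = i2.

Lemma zero_or_signMsign (x : R) k : zero_or_sign x -> zero_or_sign ((-1) ^+ k * x).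
Proof.
rewrite -signr_odd; case: (odd k); rewrite ?expr0 ?expr1 ?mul1r ?mulN1r //.
by case=> [->|[->|->]]; rewrite ?oppr0 ?opprK; [left|right; right|right; left].
Qed.

Lemma det_eq0_of_rreg_kernel k (M : 'M[R]_k) (v : 'rV[R]_k) i :
  GRing.rreg (v 0 i) -> v *m M = 0 -> \det M = 0.
Proof.
move=> v_reg vM0; apply: v_reg; rewrite /= mul0r.
have := congr1 (mulmx^~ (\adj M)) vM0.
by rewrite /= -mulmxA mul_mx_adj mul0mx mul_mx_scalar => /rowP/(_ i); rewrite !mxE.
Qed.

Lemma det_sparse_col k (M : 'M[R]_k) j :
  zero_one_mx M -> (forall i1 i2, M i1 j = 1 -> M i2 j = 1 -> i1 = i2) ->
  \det M = 0 \/ exists2 i0, M i0 j = 1 & \det M = cofactor M i0 j.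
Proof.
move=> M01 col_uniq; rewrite (expand_det_col M j).
have M_0 i0 i : M i0 j = 1 -> i != i0 -> M i j = 0.
  by move=> M_i0 ne_i_i0; case: (M01 i j) => // /col_uniq/(_ M_i0)/eqP; rewrite (negbTE ne_i_i0).
case: (pickP (fun i => M i j == 1)) => [i0 /eqP M_i0 | no_one].
  right; exists i0 => //; rewrite (bigD1 i0) //= M_i0 mul1r big1 ?addr0 // => i ne_i_i0.
  by rewrite (M_0 i0) ?mul0r.
left; apply: big1 => i _.
by case: (M01 i j) => [-> | /eqP]; rewrite ?mul0r ?no_one.
Qed.

Lemma sum_zero_one_col m n (A : 'M[R]_(m, n)) (P : pred 'I_m) j (i0 : 'I_m) :
  zero_one_mx A -> {in P &, forall i1 i2, A i1 j = 1 -> A i2 j = 1 -> i1 = i2} ->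
  P i0 -> A i0 j = 1 -> \sum_(i | P i) A i j = 1.
Proof.
move=> A01 A_uniq P_i0 A_i0; rewrite (bigD1 i0) //= big1 ?addr0 // => i /andP [P_i ne_i_i0].
by case: (A01 i j) => // A_i; rewrite (A_uniq i i0) ?eqxx in ne_i_i0.
Qed.

Lemma det_balanced_bipartite k (side : 'I_k.+1 -> bool) (M : 'M[R]_k.+1) :
  zero_one_mx M -> one_per_col_on side M ->
  (forall j b, exists2 i, M i j = 1 & side i = b) -> \det M = 0.
Proof.
move=> M01 M_uniq balanced.
pose v := \row_i (if side i then 1 else -1 : R).
apply: (@det_eq0_of_rreg_kernel _ _ v ord0).
  by rewrite mxE; case: ifP => _; [exact: rreg1 | exact/rregN/rreg1].
apply/rowP => j; rewrite [RHS]mxE.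
have side_sum b : \sum_(i | side i == b) M i j = 1.
  have [i M_i /eqP side_i] := balanced j b.
  apply: (sum_zero_one_col M01 _ side_i M_i) => i1 i2 /eqP s1 /eqP s2 M1 M2.
  by apply: M_uniq M1 M2 _; rewrite s1 s2.
have -> : (v *m M) 0 j = \sum_(i | side i == true) M i j - \sum_(i | side i == false) M i j.
  rewrite mxE (bigID side) /= -sumrN; congr (_ + _); apply: eq_big => i;
    rewrite ?mxE; case: (side i) => //= _; rewrite ?mul1r ?mulN1r //.
by rewrite !side_sum subrr.
Qed.

Lemma det_bipartite_incidence k (side : 'I_k -> bool) (M : 'M[R]_k) :
  zero_one_mx M -> one_per_col_on side M -> zero_or_sign (\det M).
Proof.
elim: k side M => [|k IHk] side M M01 M_uniq; first by rewrite det_mx00; right; left.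
pose one_sided (jb : 'I_k.+1 * bool) := [forall i, (M i jb.1 == 1) ==> (side i != jb.2)].
case: (pickP one_sided) => [[j b] /forallP /= one_sided_j | two_sided]; last first.
  left; apply: (det_balanced_bipartite M01 M_uniq) => j b.
  move/negbT: (two_sided (j, b)); rewrite negb_forall => /existsP [i].
  by rewrite negb_imply negbK => /andP [/eqP M_i /eqP side_i]; exists i.
have col_uniq i1 i2 : M i1 j = 1 -> M i2 j = 1 -> i1 = i2.
  move=> M1 M2; apply: (M_uniq _ _ _ M1 M2).
  have := one_sided_j i2; have := one_sided_j i1; rewrite M1 M2 eqxx /=.
  by case: (side i1); case: (side i2); case: (b).
case: (det_sparse_col M01 col_uniq) => [-> | [i0 M_i0 ->]]; first by left.
apply/zero_or_signMsign/(IHk (side \o lift i0)) => [a c|c a1 a2]; rewrite !mxE //=.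
by move=> M1 M2 /(M_uniq _ _ _ M1 M2)/lift_inj.
Qed.

Section Blocks.

Variables m1 m2 n1 n2 : nat.

Lemma zero_one_row_mx (A : 'M[R]_(m1, n1)) (B : 'M[R]_(m1, n2)) :
  zero_one_mx A -> zero_one_mx B -> zero_one_mx (row_mx A B).
Proof. by move=> A01 B01 i j; case: (split_ordP j) => k ->; rewrite (row_mxEl, row_mxEr). Qed.

Lemma zero_one_col_mx (A : 'M[R]_(m1, n1)) (B : 'M[R]_(m2, n1)) :
  zero_one_mx A -> zero_one_mx B -> zero_one_mx (col_mx A B).
Proof. by move=> A01 B01 i j; case: (split_ordP i) => k ->; rewrite (col_mxEu, col_mxEd). Qed.

Lemma one_per_col_row_mx (A : 'M[R]_(m1, n1)) (B : 'M[R]_(m1, n2)) :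
  one_per_col A -> one_per_col B -> one_per_col (row_mx A B).
Proof.
move=> A1 B1 j i1 i2; case: (split_ordP j) => k ->; rewrite ?row_mxEl ?row_mxEr.
  exact: A1.
exact: B1.
Qed.

Lemma one_per_col_col0mx (B : 'M[R]_(m2, n1)) :
  one_per_col B -> one_per_col (col_mx (0 : 'M[R]_(m1, n1)) B).
Proof.
move=> B1 j i1 i2.
case: (split_ordP i1) => k1 ->; rewrite ?col_mxEu ?col_mxEd mxE.
  by move=> /esym/eqP; rewrite oner_eq0.
case: (split_ordP i2) => k2 ->; rewrite ?col_mxEu ?col_mxEd ?mxE.
  by move=> _ /esym/eqP; rewrite oner_eq0.
by move=> B_1 B_2; rewrite (B1 _ _ _ B_1 B_2).
Qed.

Lemma one_per_col_colmx0 (A : 'M[R]_(m1, n1)) :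
  one_per_col A -> one_per_col (col_mx A (0 : 'M[R]_(m2, n1))).
Proof.
move=> A1 j i1 i2.
case: (split_ordP i1) => k1 ->; rewrite ?col_mxEu ?col_mxEd ?mxE; last first.
  by move=> /esym/eqP; rewrite oner_eq0.
case: (split_ordP i2) => k2 ->; rewrite ?col_mxEu ?col_mxEd ?mxE.
  by move=> A_1 A_2; rewrite (A1 _ _ _ A_1 A_2).
by move=> _ /esym/eqP; rewrite oner_eq0.
Qed.

Lemma col_mx_one_per_col_on (A : 'M[R]_(m1, n1)) (B : 'M[R]_(m2, n1)) :
  one_per_col A -> one_per_col B ->
  one_per_col_on (fun i => (i < m1)%N) (col_mx A B).
Proof.
move=> A1 B1 j i1 i2.
case: (split_ordP i1) => k1 ->; case: (split_ordP i2) => k2 ->;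
  rewrite ?col_mxEu ?col_mxEd /= ?ltn_ord ?ltnNge ?leq_addr //.
- by move=> A_1 A_2 _; rewrite (A1 _ _ _ A_1 A_2).
- by move=> B_1 B_2 _; rewrite (B1 _ _ _ B_1 B_2).
Qed.

End Blocks.

Lemma natr_bool01 (b : bool) : b%:R = 0 :> R \/ b%:R = 1 :> R.
Proof. by case: b; [right | left]. Qed.

Lemma natr_bool_eq1 (b : bool) : b%:R = 1 :> R -> b.
Proof. by case: b => // /esym/eqP; rewrite oner_eq0. Qed.

Lemma zero_one_scalar1 n : zero_one_mx (1%:M : 'M[R]_n).
Proof. by move=> i j; rewrite mxE; apply: natr_bool01. Qed.

Lemma zero_one_const_mx m n (c : R) : c = 0 \/ c = 1 -> zero_one_mx (const_mx c : 'M_(m, n)).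
Proof. by move=> c01 i j; rewrite mxE. Qed.

Lemma one_per_col_scalar1 n : one_per_col (1%:M : 'M[R]_n).
Proof.
by move=> j i1 i2; rewrite !mxE => /natr_bool_eq1/eqP -> /natr_bool_eq1/eqP ->.
Qed.

Lemma one_per_col_row n (A : 'M[R]_(1, n)) : one_per_col A.
Proof. by move=> j i1 i2 _ _; rewrite !ord1. Qed.

End BipartiteIncidence.

Lemma bipartite_incidence_tu m n (side : 'I_m -> bool) (A : 'M[int]_(m, n)) :
  zero_one_mx A -> one_per_col_on side A -> totally_unimodular A.
Proof.
move=> A01 A_uniq k f g f_inj g_inj /=.
apply: (det_bipartite_incidence (side := side \o f)) => [i j | j i1 i2]; rewrite !mxE.
  exact: A01.
by move=> A_1 A_2 /(A_uniq _ _ _ A_1 A_2)/f_inj.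
Qed.

Lemma zero_one_part_mx n L (T : 'I_n -> 'I_L) : zero_one_mx (part_mx T).
Proof. by move=> l i; rewrite mxE; apply: natr_bool01. Qed.

Lemma one_per_col_part_mx n L (T : 'I_n -> 'I_L) : one_per_col (part_mx T).
Proof. by move=> i l1 l2; rewrite !mxE => /natr_bool_eq1/eqP <- /natr_bool_eq1/eqP. Qed.

Theorem lemma6 (n L : nat) (T : 'I_n -> 'I_L)
    (T_onto : forall l : 'I_L, exists i : 'I_n, T i = l)
    (p : 'I_L -> int) (Gamma : int) :
  totally_unimodular (brmrs_mx T).
Proof.
apply: (@bipartite_incidence_tu _ _ (fun r => (r < n)%N)); rewrite /brmrs_mx.
  repeat apply: zero_one_col_mx; repeat apply: zero_one_row_mx;
    by [apply: zero_one_scalar1 | apply: zero_one_part_mx | apply: zero_one_const_mx; auto].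
apply: col_mx_one_per_col_on; first by apply: one_per_col_row_mx; apply: one_per_col_scalar1.
rewrite -block_mxEv block_mxEh; apply: one_per_col_row_mx.
  by apply/one_per_col_col0mx/one_per_col_part_mx.
by apply/one_per_col_colmx0/one_per_col_row.
Qed.
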